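(* Let $\tilde{\Phi}:\mathbb{R}_{++}^{n\times m}\to\mathbb{R}$ be a differentiable convex function which is positively 1-homogeneous ($\tilde{\Phi}(tA)=t\tilde{\Phi}(A)$ for all $t>0$, $A\in\mathbb{R}_{++}^{n\times m}$) and strictly convex on $\mathcal{P}_{nm-1}$, and suppose that its gradient $S:\mathbb{R}_{++}^{n\times m}\to\mathbb{R}^{n\times m}$, $S^{ij}(A)=\partial\tilde{\Phi}/\partial A_{ij}(A)$, restricted to $\mathcal{P}_{nm-1}$ and composed with the quotient map, induces a bijection $\mathcal{P}_{nm-1}\to\mathbb{R}^{n\times m}/\langle 1_{nm}\rangle$. Let $\Phi$ be the restriction of $\tilde{\Phi}$ to $\mathcal{P}_{nm-1}$. Then for each $p\in\mathcal{P}_{n-1}$, $q\in\mathcal{P}_{m-1}$, the problem of minimizing $\Phi(P)$ over $P\in\Pi(p,q)$ has a unique solution $P^*(p,q)\in\Pi(p,q)$, and there exists $(\alpha^*,\beta^* )\in\mathbb{R}^n\times\mathbb{R}^m$ with \[ S^{ij}(P^*(p,q))=(\alpha^* )^i+(\beta^* )^j,\qquad 1\le i\le n,\ 1\le j\le m. \]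
   Context: $\mathbb{R}_{++}^{n\times m}$ denotes the set of real $n\times m$ matrices with all entries strictly positive. $\mathcal{P}_{n-1}=\{p\in\mathbb{R}^n:\sum_i p_i=1,\ p_i>0\}$, similarly $\mathcal{P}_{m-1}$, and $\mathcal{P}_{nm-1}=\{P\in\mathbb{R}_{++}^{n\times m}:\sum_{i,j}P_{ij}=1\}$. $\Pi(p,q)=\{P\in\mathcal{P}_{nm-1}:\sum_j P_{ij}=p_i\ \forall i,\ \sum_i P_{ij}=q_j\ \forall j\}$. $1_{nm}$ is the $n\times m$ matrix with all entries equal to $1$, and $\mathbb{R}^{n\times m}/\langle 1_{nm}\rangle$ is the quotient vector space by the relation $u\sim v\iff u-v=c\,1_{nm}$ for some $c\in\mathbb{R}$. *)

From HB Require Import structures.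
From mathcomp Require Import all_boot all_order all_algebra.
From mathcomp Require Import all_classical all_reals all_analysis.
Set Implicit Arguments. Unset Strict Implicit. Unset Printing Implicit Defensive.
Import Order.TTheory GRing.Theory Num.Theory.
Import numFieldNormedType.Exports.
Local Open Scope ring_scope.

Section Defs.
Variables (R : realType) (n m : nat).

Definition posmx (A : 'M[R]_(n, m)) : Prop := forall i j, 0 < A i j.

Definition simplexmx (A : 'M[R]_(n, m)) : Prop :=
  posmx A /\ \sum_(i < n) \sum_(j < m) A i j = 1.

Definition simplexv (k : nat) (p : 'I_k -> R) : Prop :=
  (forall i, 0 < p i) /\ \sum_(i < k) p i = 1.

Definition coupling (p : 'I_n -> R) (q : 'I_m -> R) (P : 'M[R]_(n, m)) : Prop :=
  simplexmx P /\ (forall i, \sum_(j < m) P i j = p i)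
              /\ (forall j, \sum_(i < n) P i j = q j).

Definition gradmx (Phi : 'M[R]_(n, m) -> R) (A : 'M[R]_(n, m)) : 'M[R]_(n, m) :=
  \matrix_(i, j) ('D_(delta_mx i j) Phi A).

End Defs.

From HB Require Import structures.
From mathcomp Require Import all_boot all_order all_algebra.
From mathcomp Require Import all_classical all_reals all_analysis.
From mathcomp Require Import ring lra.
Import Order.TTheory GRing.Theory Num.Theory.
Import numFieldNormedType.Exports.
Local Open Scope ring_scope.
Local Open Scope classical_set_scope.

(* The gradient bijection lets us invert S modulo constants: for every matrix
   U there is a unique gradinv U in the simplex whose gradient is U + c 1.
   This defines the conjugate Phi_star U = <U, gradinv U> - Phi (gradinv U),
   which satisfies the Fenchel-Young inequality <U, X> - Phi_star U <= Phi X
   on the simplex (from the first-order convexity inequality), with equality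
   exactly at X = gradinv U (strict convexity).  The point gradinv W is the
   only subgradient of Phi_star at W, which makes gradinv continuous along
   rays (gradinv_ray, by a compactness argument).

   With the product coupling P0 = p q^T we maximise the dual objective
   <W, P0> - Phi_star W over the separable matrices W_ij = a_i + b_j.  It is
   upper semicontinuous and coercive once normalised by <W, P0> = 0, so a
   maximiser Wb exists (dual_max).  Stationarity of Wb in every separable
   direction says that gradinv Wb has the marginals p and q, and Fenchel-Young
   then shows that gradinv Wb is the unique minimiser of Phi over Pi(p, q),
   with gradient Wb + c 1, which is separable. *)

Set Implicit Arguments. Unset Strict Implicit. Unset Printing Implicit Defensive.

Section Pairing.
Variables (R : realType) (n m : nat).
Implicit Types (U V A B X Y W : 'M[R]_(n, m)).

Definition mdot U A : R := \sum_i \sum_j U i j * A i j.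

Lemma mdotDl U V A : mdot (U + V) A = mdot U A + mdot V A.
Proof.
rewrite /mdot -big_split; apply: eq_bigr => i _; rewrite -big_split.
by apply: eq_bigr => j _; rewrite !mxE mulrDl.
Qed.

Lemma mdot0l A : mdot 0 A = 0.
Proof. by rewrite /mdot big1 // => i _; rewrite big1 // => j _; rewrite mxE mul0r. Qed.

Lemma mdotZl c U A : mdot (c *: U) A = c * mdot U A.
Proof.
rewrite /mdot mulr_sumr; apply: eq_bigr => i _; rewrite mulr_sumr.
by apply: eq_bigr => j _; rewrite !mxE mulrA.
Qed.

Lemma mdotNl U A : mdot (- U) A = - mdot U A.
Proof. by rewrite -scaleN1r mdotZl mulN1r. Qed.

Lemma mdotBl U V A : mdot (U - V) A = mdot U A - mdot V A.
Proof. by rewrite mdotDl mdotNl. Qed.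

Lemma mdotC U A : mdot U A = mdot A U.
Proof. by apply: eq_bigr => i _; apply: eq_bigr => j _; rewrite mulrC. Qed.

Lemma mdotDr U A B : mdot U (A + B) = mdot U A + mdot U B.
Proof. by rewrite mdotC mdotDl !(mdotC _ U). Qed.

Lemma mdotZr c U A : mdot U (c *: A) = c * mdot U A.
Proof. by rewrite mdotC mdotZl mdotC. Qed.

Lemma mdotBr U A B : mdot U (A - B) = mdot U A - mdot U B.
Proof. by rewrite mdotC mdotBl !(mdotC _ U). Qed.

Lemma mdot1l A : mdot (const_mx 1) A = \sum_i \sum_j A i j.
Proof. by apply: eq_bigr => i _; apply: eq_bigr => j _; rewrite mxE mul1r. Qed.

Lemma mdot_deltar U k l : mdot U (delta_mx k l) = U k l.
Proof.
rewrite /mdot (bigD1 k) //= (bigD1 l) //= !mxE !eqxx /= mulr1.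
rewrite big1 ?addr0; last by move=> j /negbTE jl; rewrite mxE eqxx jl /= mulr0.
rewrite big1 ?addr0 // => i /negbTE ik; apply: big1 => j _.
by rewrite mxE ik /= mulr0.
Qed.

Lemma mdot_continuous U : continuous (mdot U).
Proof.
move=> X; have FX : Filter (nbhs X) := nbhs_filter X.
apply: (@cvg_big R^o 'I_n +%R 0 xpredT add_continuous _ (nbhs X)) => // i _.
apply: (@cvg_big R^o 'I_m +%R 0 xpredT add_continuous _ (nbhs X)) => // j _.
by apply: cvgM; [exact: cvg_cst | exact: coord_continuous].
Qed.

End Pairing.

Section Simplex.
Variables (R : realType) (n m : nat).
Implicit Types (U V A B X Y W : 'M[R]_(n, m)).

Lemma le_double_sum (F : 'I_n -> 'I_m -> R) i j :
  (forall i j, 0 <= F i j) -> F i j <= \sum_i \sum_j F i j.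
Proof.
move=> F0; rewrite (bigD1 i) //= (bigD1 j) //= -addrA lerDl.
by apply: addr_ge0; apply: sumr_ge0 => k _ //; apply: sumr_ge0.
Qed.

Lemma simplex_mdot1 A : simplexmx A -> mdot (const_mx 1) A = 1.
Proof. by case=> _ s; rewrite mdot1l. Qed.

Lemma simplex_entry A i j : simplexmx A -> 0 <= A i j <= 1.
Proof.
move=> [pA sA]; apply/andP; split; first exact/ltW.
by rewrite -sA; apply: (le_double_sum (F := fun i j => A i j)) => k l; exact/ltW.
Qed.

Lemma mdot_simplex_bound V A :
  simplexmx A -> `|mdot V A| <= \sum_i \sum_j `|V i j|.
Proof.
move=> sA; apply: le_trans (ler_norm_sum _ _ _) _.
apply: ler_sum => i _; apply: le_trans (ler_norm_sum _ _ _) _.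
apply: ler_sum => j _; rewrite normrM.
have /andP[a0 a1] := simplex_entry i j sA.
by rewrite (ger0_norm a0) -[leRHS]mulr1 ler_wpM2l.
Qed.

Lemma simplex_comb A B t : simplexmx A -> simplexmx B -> 0 < t < 1 ->
  simplexmx ((1 - t) *: A + t *: B).
Proof.
move=> sA sB /andP[t0 t1]; split.
  by move=> i j; rewrite !mxE; have := sA.1 i j; have := sB.1 i j; nra.
by rewrite -mdot1l mdotDr !mdotZr !simplex_mdot1 // !mulr1 subrK.
Qed.

Lemma simplex_half_vertex A i j : simplexmx A ->
  simplexmx (2^-1 *: A + 2^-1 *: delta_mx i j).
Proof.
move=> sA; split.
  move=> k l; rewrite !mxE; have := sA.1 k l.
  have : 0 <= ((k == i) && (l == j))%:R :> R by rewrite ler0n.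
  lra.
by rewrite -mdot1l mdotDr !mdotZr mdot_deltar mxE simplex_mdot1 //; lra.
Qed.

Lemma simplex_mean_zero_lower A W (C : R) i j :
  simplexmx A -> mdot W A = 0 -> (forall k l, W k l <= C) ->
  C - C / A i j <= W i j.
Proof.
move=> sA W0 WC; have Apos := sA.1 i j.
have hs : mdot (C *: const_mx 1 - W) A = C.
  by rewrite mdotBl mdotZl simplex_mdot1 // W0 mulr1 subr0.
have : (C *: const_mx 1 - W) i j * A i j <= C.
  rewrite -[leRHS]hs.
  apply: (le_double_sum (F := fun k l => (C *: const_mx 1 - W) k l * A k l)) => k l.
  by rewrite !mxE mulr1 mulr_ge0 ?subr_ge0 // ltW // sA.1.
by rewrite !mxE mulr1 -ler_pdivlMr // lerBlDr -lerBlDl.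
Qed.

Lemma simplexv_gt0 k (p : 'I_k -> R) : simplexv p -> (0 < k)%N.
Proof.
case: k p => // p [_]; rewrite big_ord0 => /eqP.
by rewrite eq_sym oner_eq0.
Qed.

End Simplex.

Section Separable.
Variables (R : realType) (n m : nat).
Implicit Types (V W X Y : 'M[R]_(n, m)).

(* Separable matrices (a_i + b_j)_ij, the span of the marginal constraints. *)
Definition sepmx (a : 'I_n -> R) (b : 'I_m -> R) : 'M[R]_(n, m) :=
  \matrix_(i, j) (a i + b j).

Definition separable W := exists a b, W = sepmx a b.

Lemma separableDZ V W t : separable V -> separable W -> separable (V + t *: W).
Proof.
move=> [a [b ->]] [a' [b' ->]].
exists (fun i => a i + t * a' i), (fun j => b j + t * b' j).
by apply/matrixP => i j; rewrite !mxE; ring.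
Qed.

Lemma separable_const c : separable (const_mx c).
Proof. by exists (fun=> c), (fun=> 0); apply/matrixP => i j; rewrite !mxE addr0. Qed.

Lemma separable_cross (i0 : 'I_n) (j0 : 'I_m) W :
  separable W <-> forall i j, W i j + W i0 j0 - W i j0 - W i0 j = 0.
Proof.
split=> [[a [b ->]] i j | hW]; first by rewrite !mxE; ring.
exists (fun i => W i j0 - W i0 j0), (fun j => W i0 j).
by apply/matrixP => i j; rewrite mxE; have := hW i j; lra.
Qed.

Lemma separable_closed (i0 : 'I_n) (j0 : 'I_m) : closed [set W | separable W].
Proof.
pose cross (ij : 'I_n * 'I_m) W := W ij.1 ij.2 + W i0 j0 - W ij.1 j0 - W i0 ij.2.
have -> : [set W | separable W] =
    \bigcap_(ij in [set: 'I_n * 'I_m]) (cross ij @^-1` [set 0]).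
  apply/seteqP; split=> W /=.
    by move/(separable_cross i0 j0) => hW [i j] _; exact: hW.
  by move=> hW; apply/(separable_cross i0 j0) => i j; exact: (hW (i, j)).
have cont ij W : {for W, continuous (cross ij)}.
  apply: (@continuousB R); last exact: coord_continuous.
  apply: (@continuousB R); last exact: coord_continuous.
  by apply: (@continuousD R); exact: coord_continuous.
apply: closed_bigI => ij _; apply: preimage_closed; last exact: closed_eq.
by move=> W _; exact: cont.
Qed.

Lemma mdot_sepE a b X : mdot (sepmx a b) X =
  \sum_i a i * \sum_j X i j + \sum_j b j * \sum_i X i j.
Proof.
rewrite /mdot (eq_bigr (fun i => a i * \sum_j X i j + \sum_j b j * X i j)).
  rewrite big_split /= exchange_big /=; congr (_ + _).
  by apply: eq_bigr => j _; rewrite mulr_sumr.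
move=> i _; rewrite mulr_sumr -big_split /=; apply: eq_bigr => j _.
by rewrite mxE mulrDl.
Qed.

Lemma mdot_sep_coupling p q a b X : coupling p q X ->
  mdot (sepmx a b) X = \sum_i a i * p i + \sum_j b j * q j.
Proof.
case=> _ [rX cX]; rewrite mdot_sepE; congr (_ + _).
  by apply: eq_bigr => i _; rewrite rX.
by apply: eq_bigr => j _; rewrite cX.
Qed.

Lemma sum_indicator (I : finType) (f : I -> R) i :
  \sum_k (k == i)%:R * f k = f i.
Proof.
rewrite (bigD1 i) //= eqxx mul1r big1 ?addr0 // => k /negbTE ->.
by rewrite mul0r.
Qed.

Lemma marginals_of_sep X Y :
  (forall a b, mdot (sepmx a b) X = mdot (sepmx a b) Y) ->
  (forall i, \sum_j X i j = \sum_j Y i j) /\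
  (forall j, \sum_i X i j = \sum_i Y i j).
Proof.
have sum0 (I : finType) (f : I -> R) : \sum_k 0 * f k = 0.
  by rewrite big1 // => k _; rewrite mul0r.
move=> hXY; split=> [i | j].
  have := hXY (fun k => (k == i)%:R) (fun=> 0).
  by rewrite !mdot_sepE !sum0 !addr0 !sum_indicator.
have := hXY (fun=> 0) (fun k => (k == j)%:R).
by rewrite !mdot_sepE !sum0 !add0r !sum_indicator.
Qed.

End Separable.

Section MatrixBox.
Variables (R : realType) (n m : nat).

Lemma vec_mx_continuous : continuous (@vec_mx R n m).
Proof.
move=> v; apply/(@cvg_ballP _ _ _ (nbhs v) (nbhs_filter v)) => e e0; near=> w.
split => // i j; rewrite !mxE.
have : ball v e w by near: w; exact: nbhsx_ballx.
by case=> _; apply.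
Unshelve. all: by end_near.
Qed.

Lemma mx_box_compact (M : R) :
  compact [set A : 'M[R]_(n, m) | forall i j, `|A i j| <= M].
Proof.
pose box := [set v : 'rV[R]_(n * m) | forall k, `[- M, M]%classic (v ord0 k)].
have box_compact : compact box.
  by apply: (@rV_compact _ _ (fun=> `[- M, M]%classic)) => _; exact: segment_compact.
have -> : [set A : 'M[R]_(n, m) | forall i j, `|A i j| <= M] = vec_mx @` box.
  apply/seteqP; split => [A HA|_ [v Hv <-] i j].
    exists (mxvec A); last by rewrite mxvecK.
    by move=> k; case/mxvec_indexP: k => i j; rewrite /= in_itv /= mxvecE -ler_norml.
  by rewrite mxE ler_norml; have := Hv (mxvec_index i j); rewrite /= in_itv.
apply: continuous_compact => //.
by apply: continuous_subspaceT; exact: vec_mx_continuous.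
Qed.

End MatrixBox.

Section ClusterPoints.
Variables (R : realType) (T : topologicalType).

Lemma cluster_le (F : set_system T) (x : T) (h : T -> R) (c : R) :
  Filter F -> cluster F x -> {for x, continuous h} ->
  (forall e, 0 < e -> \forall y \near F, h y <= c + e) -> h x <= c.
Proof.
move=> FF clx hx hF; rewrite leNgt; apply/negP => hlt.
pose e := (h x - c) / 2.
have e0 : 0 < e by rewrite divr_gt0 // subr_gt0.
have near_x : \forall y \near x, h x - e < h y.
  by apply: (@cvgr_gt _ _ (nbhs x) _ h (h x) hx); rewrite ltrBlDr ltrDl.
have [y [Fy xy]] := clx _ _ (hF e e0) near_x.
by move: Fy xy; rewrite /e; lra.
Qed.

Lemma cluster_right_le (A : R -> T) (x : T) (h : T -> R) (c K : R) :
  cluster (A @ 0^'+) x -> {for x, continuous h} ->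
  (forall t, 0 < t < 1 -> h (A t) <= c + t * K) -> h x <= c.
Proof.
move=> clx hx hA; apply: (cluster_le _ clx hx) => e e0.
change (\forall t \near 0^'+, h (A t) <= c + e).
have K1 : 0 < `|K| + 1 by rewrite ltr_pwDr // normr_ge0.
near=> t.
have t0 : 0 < t by near: t; exact: nbhs_right_gt.
have t1 : t < 1 by near: t; exact: nbhs_right_lt.
have te : t * (`|K| + 1) < e.
  by rewrite -ltr_pdivlMr //; near: t; apply: nbhs_right_lt; exact: divr_gt0.
have tK : t * K <= t * `|K| by apply: ler_wpM2l; [exact: ltW | exact: ler_norm].
have t01 : 0 < t < 1 by rewrite t0 t1.
have := hA t t01; move: te; rewrite mulrDr mulr1; lra.
Unshelve. all: by end_near.
Qed.

Lemma compact_usc_max (K : set T) (f : T -> R) :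
  compact K -> K !=set0 -> (exists M, forall x, K x -> f x <= M) ->
  (forall x e, K x -> 0 < e -> \forall y \near x, f y < f x + e) ->
  exists2 x, K x & forall y, K y -> f y <= f x.
Proof.
move=> cK [x0 Kx0] [M fM] usc.
pose s := sup (f @` K).
have hs : has_sup (f @` K).
  by split; [exists (f x0), x0 | exists M => _ [y Ky <-]; exact: fM].
have le_s y : K y -> f y <= s.
  by move=> Ky; apply: sup_upper_bound => //; exists y.
pose near_sup e := K `&` [set y | s - e < f y].
pose F := filter_from [set e : R | 0 < e] near_sup.
have FF : ProperFilter F.
  apply: filter_from_proper; last first.
    move=> e e0; have [_ [y Ky <-] lt] := sup_adherent e0 hs.
    by exists y; split.
  apply: filter_from_filter; first by exists 1 => /=.
  move=> e1 e2 e10 e20; exists (Order.min e1 e2); first by rewrite /= lt_min e10 e20.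
  have m1 : Order.min e1 e2 <= e1 by rewrite ge_min lexx.
  have m2 : Order.min e1 e2 <= e2 by rewrite ge_min lexx orbT.
  by move=> y [Ky /= hy]; split; split => //=; lra.
have [|x [Kx clx]] := cK F FF; first by exists 1; [exact: ltr01 | move=> y []].
exists x => // y Ky; apply: le_trans (le_s y Ky) _.
rewrite leNgt; apply/negP => fxs.
pose e := (s - f x) / 2.
have e0 : 0 < e by rewrite divr_gt0 // subr_gt0.
have [z [[_ hz] xz]] := clx _ _ (ex_intro2 _ _ e e0 (fun=> id)) (usc x e Kx e0).
by move: hz xz; rewrite /e /=; lra.
Qed.

End ClusterPoints.

Section Conjugate.
Variables (R : realType) (n m : nat) (Phi : 'M[R]_(n, m) -> R).
Hypothesis Hdiff : forall A, posmx A -> differentiable Phi A.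
Hypothesis Hconv : forall (A B : 'M[R]_(n, m)) (t : R), posmx A -> posmx B ->
  0 <= t <= 1 -> Phi ((1 - t) *: A + t *: B) <= (1 - t) * Phi A + t * Phi B.
Hypothesis Hsconv : forall (A B : 'M[R]_(n, m)) (t : R),
  simplexmx A -> simplexmx B -> A != B -> 0 < t < 1 ->
  Phi ((1 - t) *: A + t *: B) < (1 - t) * Phi A + t * Phi B.
Hypothesis Hinj : forall (A B : 'M[R]_(n, m)) (c : R),
  simplexmx A -> simplexmx B ->
  gradmx Phi A - gradmx Phi B = c *: const_mx 1 -> A = B.
Hypothesis Hsurj : forall U : 'M[R]_(n, m), exists A : 'M[R]_(n, m), exists c : R,
  simplexmx A /\ gradmx Phi A = U + c *: const_mx 1.

Implicit Types (U V W A B X : 'M[R]_(n, m)).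
Local Notation one := (const_mx 1 : 'M[R]_(n, m)).

Lemma derive_gradE A v : posmx A -> 'D_v Phi A = mdot (gradmx Phi A) v.
Proof.
move=> PA; rewrite deriveE; last exact: Hdiff.
rewrite {1}(matrix_sum_delta v) linear_sum; apply: eq_bigr => i _.
rewrite linear_sum; apply: eq_bigr => j _.
rewrite linearZ /= mxE -deriveE; last exact: Hdiff.
by rewrite mulrC.
Qed.

Lemma grad_ineq A B : posmx A -> posmx B ->
  Phi A + mdot (gradmx Phi A) (B - A) <= Phi B.
Proof.
move=> PA PB; rewrite -derive_gradE // -lerBrDl.
have dA : derivable Phi A (B - A) := diff_derivable (Hdiff PA).
apply: (cvgr_to_le (cvg_dnbhs_at_right dA)); near=> h.
have h0 : 0 < h by near: h; exact: nbhs_right_gt.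
have h1 : h < 1 by near: h; exact: nbhs_right_lt.
have h01 : 0 <= h <= 1 by rewrite !ltW.
have := Hconv PA PB h01.
have -> : (1 - h) *: A + h *: B = h *: (B - A) + A.
  by apply/matrixP => i j; rewrite !mxE; ring.
by move=> H; rewrite /= ler_pdivrMl // mulrBr; lra.
Unshelve. all: by end_near.
Qed.

Definition gradinv U : 'M[R]_(n, m) := proj1_sig (cid (Hsurj U)).

Lemma gradinvP U :
  exists c, simplexmx (gradinv U) /\ gradmx Phi (gradinv U) = U + c *: one.
Proof. exact: (proj2_sig (cid (Hsurj U))). Qed.

Lemma gradinv_simplex U : simplexmx (gradinv U).
Proof. by have [c []] := gradinvP U. Qed.

Lemma gradinv_uniq U A c :
  simplexmx A -> gradmx Phi A = U + c *: one -> A = gradinv U.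
Proof.
move=> sA gA; have [c' [sF gF]] := gradinvP U.
apply: (Hinj (c := c - c') sA sF); rewrite gA gF.
by apply/matrixP => i j; rewrite !mxE; ring.
Qed.

Definition Phi_star U := mdot U (gradinv U) - Phi (gradinv U).

Lemma fenchel_young U X : simplexmx X -> mdot U X - Phi_star U <= Phi X.
Proof.
move=> sX; have [c [sF gF]] := gradinvP U.
have := grad_ineq sF.1 sX.1.
rewrite gF mdotDl !mdotBr !mdotZl !simplex_mdot1 // /Phi_star; lra.
Qed.

Lemma Phi_star_subgrad W U :
  Phi_star W + mdot (U - W) (gradinv W) <= Phi_star U.
Proof.
have := fenchel_young U (gradinv_simplex W).
by rewrite mdotBl /Phi_star; lra.
Qed.

Lemma Phi_star_shift U c : Phi_star (U + c *: one) = Phi_star U + c.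
Proof.
have [c' [sF gF]] := gradinvP U.
have same : gradinv (U + c *: one) = gradinv U.
  symmetry; apply: (gradinv_uniq (c := c' - c) sF); rewrite gF.
  by apply/matrixP => i j; rewrite !mxE; ring.
by rewrite /Phi_star same mdotDl mdotZl simplex_mdot1 // mulr1; lra.
Qed.

Lemma fenchel_young_tight X W :
  simplexmx X -> Phi X <= mdot W X - Phi_star W -> X = gradinv W.
Proof.
move=> sX tight; apply/eqP; apply/negPn/negP => neq.
have h12 : 0 < (1 / 2 : R) < 1 by apply/andP; split; lra.
have := Hsconv sX (gradinv_simplex W) neq h12.
have := fenchel_young W (simplex_comb sX (gradinv_simplex W) h12).
have tightY : Phi (gradinv W) = mdot W (gradinv W) - Phi_star W.
  by rewrite /Phi_star; lra.
by rewrite mdotDr !mdotZr; lra.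
Qed.

Definition subgradient W x := forall U, Phi_star W + mdot (U - W) x <= Phi_star U.

(* gradinv W is the only subgradient: a subgradient has mass one (shift),
   positive entries (compare with gradinv (W - delta)), and attains
   equality in Fenchel-Young (test against its own gradient). *)
Lemma subgradient_unique W x : subgradient W x -> x = gradinv W.
Proof.
move=> sub.
have sum1 : mdot one x = 1.
  have shift c : c * mdot one x <= c.
    have -> : c * mdot one x = mdot (W + c *: one - W) x.
      by rewrite addrAC subrr add0r mdotZl.
    by have := sub (W + c *: one); rewrite Phi_star_shift; lra.
  by have := shift 1; have := shift (-1); rewrite !mulN1r !mul1r; lra.
have pos : posmx x.
  move=> k l; pose B := gradinv (W - delta_mx k l).
  have := sub (W - delta_mx k l); have := Phi_star_subgrad (W - delta_mx k l) W.
  have -> : W - (W - delta_mx k l) = delta_mx k l by rewrite opprB addrC subrK.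
  have -> : W - delta_mx k l - W = - delta_mx k l by rewrite addrAC subrr add0r.
  rewrite mdotNl !(mdotC (delta_mx k l)) !mdot_deltar -/B.
  by have := (gradinv_simplex (W - delta_mx k l)).1 k l; rewrite -/B; lra.
have sx : simplexmx x by split; rewrite // -mdot1l.
apply: fenchel_young_tight => //.
have gx : gradinv (gradmx Phi x) = x.
  by symmetry; apply: (gradinv_uniq (c := 0)); rewrite // scale0r addr0.
by have := sub (gradmx Phi x); rewrite /Phi_star gx mdotBl; lra.
Qed.

(* Continuity of gradinv along rays: the values gradinv (W + t V) are
   subgradients at W up to O(t), so their cluster points as t -> 0+ are
   subgradients, hence equal to gradinv W. *)
Lemma gradinv_ray W V r :
  (forall t, 0 < t < 1 -> r <= mdot V (gradinv (W + t *: V))) ->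
  r <= mdot V (gradinv W).
Proof.
move=> hr; pose A t := gradinv (W + t *: V).
pose K := \sum_i \sum_j `|V i j| + `|mdot V (gradinv W)|.
have almost U t : 0 < t < 1 ->
    mdot (U - W) (A t) + (Phi_star W - Phi_star U) <= 0 + t * K.
  move=> /andP[t0 _].
  have bound : mdot V (A t) - mdot V (gradinv W) <= K.
    have := mdot_simplex_bound V (gradinv_simplex (W + t *: V)).
    have := ler_norm (mdot V (A t)); have := ler_norm (- mdot V (gradinv W)).
    by rewrite normrN /K; lra.
  have := ler_wpM2l (ltW t0) bound.
  have := Phi_star_subgrad (W + t *: V) U; have := Phi_star_subgrad W (W + t *: V).
  have -> : W + t *: V - W = t *: V by rewrite addrAC subrr add0r.
  have -> : U - (W + t *: V) = U - W - t *: V by rewrite opprD addrA.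
  by rewrite -/(A t) (mdotBl (U - W)) !mdotZl mulrBr; lra.
have FA : ProperFilter (A @ 0^'+) by apply: fmap_proper_filter.
have boxA : (A @ 0^'+) [set X | forall i j, `|X i j| <= 1].
  change (\forall t \near 0^'+, forall i j, `|A t i j| <= 1).
  apply: filterE => t i j.
  by have /andP[a0 a1] := simplex_entry i j (gradinv_simplex (W + t *: V)); rewrite ger0_norm.
have [x [_ clx]] := @mx_box_compact R n m 1 (A @ 0^'+) FA boxA.
have sub : subgradient W x.
  move=> U; suff : mdot (U - W) x + (Phi_star W - Phi_star U) <= 0 by lra.
  apply: (cluster_right_le
    (h := fun X => mdot (U - W) X + (Phi_star W - Phi_star U)) (K := K) clx).
    by apply: (@continuousD R); [exact: mdot_continuous | exact: cst_continuous].
  exact: almost.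
rewrite -(subgradient_unique sub).
suff : - mdot V x <= - r by lra.
apply: (cluster_right_le (h := fun X => - mdot V X) (K := 0) clx).
  by apply: (@continuousN R); exact: mdot_continuous.
by move=> t t01; have := hr t t01; rewrite mulr0 addr0 lerN2.
Qed.

Section Dual.
Variables (p : 'I_n -> R) (q : 'I_m -> R).
Hypotheses (Hp : simplexv p) (Hq : simplexv q).

Definition P0 : 'M[R]_(n, m) := \matrix_(i, j) (p i * q j).

Lemma P0_coupling : coupling p q P0.
Proof.
case: Hp => p0 p1; case: Hq => q0 q1.
have rows i : \sum_j P0 i j = p i.
  by under eq_bigr do rewrite mxE; rewrite -mulr_sumr q1 mulr1.
split; [split|split].
- by move=> i j; rewrite mxE mulr_gt0.
- by under eq_bigr do rewrite rows.
- exact: rows.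
- by move=> j; under eq_bigr do rewrite mxE; rewrite -mulr_suml p1 mul1r.
Qed.

Lemma P0_simplex : simplexmx P0.
Proof. by case: P0_coupling. Qed.

Definition dualobj W := mdot W P0 - Phi_star W.

Lemma dualobj_le_primal W : dualobj W <= Phi P0.
Proof. exact: fenchel_young P0_simplex. Qed.

Lemma dualobj_shift W c : dualobj (W + c *: one) = dualobj W.
Proof.
rewrite /dualobj Phi_star_shift mdotDl mdotZl simplex_mdot1; last exact: P0_simplex.
by rewrite mulr1; lra.
Qed.

(* It is upper semicontinuous: dominated by a continuous affine function
   touching it at W. *)
Lemma dualobj_usc W e : 0 < e -> \forall V \near W, dualobj V < dualobj W + e.
Proof.
move=> e0; pose h V := mdot (P0 - gradinv W) V + Phi (gradinv W).
have hW : h W = dualobj W.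
  by rewrite /h /dualobj /Phi_star mdotBl (mdotC P0) (mdotC (gradinv W)); lra.
have hc : {for W, continuous h}.
  by apply: (@continuousD R); [exact: mdot_continuous | exact: cst_continuous].
have := @cvgr_lt _ _ (nbhs W) (nbhs_filter W) h (h W) hc (dualobj W + e).
rewrite hW ltrDl => /(_ e0); apply: filterS => V; apply: le_lt_trans.
have := fenchel_young V (gradinv_simplex W).
by rewrite /h /dualobj mdotBl (mdotC P0) (mdotC (gradinv W)); lra.
Qed.

(* Normalised dual-improving matrices are bounded above entrywise (test
   Fenchel-Young against the midpoints of P0 and the vertices). *)
Lemma dualobj_upper : exists2 C, 0 <= C &
  forall W, mdot W P0 = 0 -> dualobj 0 <= dualobj W -> forall i j, W i j <= C.
Proof.
pose X i j := 2^-1 *: P0 + 2^-1 *: delta_mx i j.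
pose C := \sum_i \sum_j `|Phi (X i j) - dualobj 0|.
have C0 : 0 <= C by apply: sumr_ge0 => i _; apply: sumr_ge0.
exists (2 * C); first by rewrite mulr_ge0.
move=> W W0 WW0 i j.
have dW : dualobj W = - Phi_star W by rewrite /dualobj W0 sub0r.
have XC : Phi (X i j) - dualobj 0 <= C.
  apply: le_trans (ler_norm _) _.
  exact: (le_double_sum (F := fun i j => `|Phi (X i j) - dualobj 0|)).
have := fenchel_young W (simplex_half_vertex i j P0_simplex).
by rewrite mdotDr !mdotZr mdot_deltar W0 -/(X i j); lra.
Qed.

(* ... and hence bounded, since they have zero mean against P0 > 0. *)
Lemma dualobj_coercive : exists M, forall W, mdot W P0 = 0 ->
  dualobj 0 <= dualobj W -> forall i j, `|W i j| <= M.
Proof.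
have [C C0 up] := dualobj_upper.
pose D := \sum_i \sum_j (P0 i j)^-1.
have inv_ge0 i j : 0 <= (P0 i j)^-1 by rewrite invr_ge0 ltW // P0_simplex.1.
have CD0 : 0 <= C * D.
  by rewrite mulr_ge0 // sumr_ge0 // => i _; apply: sumr_ge0.
exists (C + C * D) => W W0 WW0 i j.
have Wup := up W W0 WW0.
have Wlow := simplex_mean_zero_lower i j P0_simplex W0 Wup.
have : C / P0 i j <= C * D.
  by rewrite ler_wpM2l //; exact: (le_double_sum (F := fun k l => (P0 k l)^-1)).
by rewrite ler_norml; have := Wup i j; lra.
Qed.

Lemma dual_max : exists2 Wb, separable Wb &
  forall W, separable W -> dualobj W <= dualobj Wb.
Proof.
have [M box] := dualobj_coercive.
pose i0 := Ordinal (simplexv_gt0 Hp); pose j0 := Ordinal (simplexv_gt0 Hq).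
pose K := [set W : 'M[R]_(n, m) | forall i j, `|W i j| <= M] `&` [set W | separable W].
have K0 : K 0 by split; [exact: box (mdot0l _) (lexx _) | exact: separable_const 0].
have cK : compact K := compact_closedI (@mx_box_compact R n m M) (separable_closed i0 j0).
have [||Wb [_ sWb] Wmax] := compact_usc_max (f := dualobj) cK (ex_intro _ 0 K0).
- by exists (Phi P0) => W _; exact: dualobj_le_primal.
- by move=> W e _; exact: dualobj_usc.
exists Wb => // W sW.
pose W' := W + (- mdot W P0) *: one.
have W'0 : mdot W' P0 = 0.
  by rewrite mdotDl mdotZl simplex_mdot1 ?mulr1 ?addrN //; exact: P0_simplex.
rewrite -(dualobj_shift W (- mdot W P0)) -/W'.
case: (lerP (dualobj 0) (dualobj W')) => hW'.
  by apply: Wmax; split; [exact: box | apply: separableDZ sW _; exact: separable_const].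
by apply: le_trans (ltW hW') _; exact: Wmax.
Qed.

Lemma dual_ray_ineq W V :
  (forall t, 0 < t < 1 -> dualobj (W + t *: V) <= dualobj W) ->
  mdot V P0 <= mdot V (gradinv W).
Proof.
move=> hmax; apply: gradinv_ray => t t01; have t0 : 0 < t by case/andP: t01.
rewrite -(ler_pM2l t0).
have := hmax t t01; have := Phi_star_subgrad (W + t *: V) W.
have -> : W - (W + t *: V) = - (t *: V) by rewrite opprD addrA subrr add0r.
by rewrite /dualobj (mdotDl W) mdotNl !mdotZl; lra.
Qed.

Lemma dual_stationary Wb : separable Wb ->
  (forall W, separable W -> dualobj W <= dualobj Wb) -> coupling p q (gradinv Wb).
Proof.
move=> sWb Wmax.
have ineq V : separable V -> mdot V P0 <= mdot V (gradinv Wb).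
  by move=> sV; apply: dual_ray_ineq => t _; apply: Wmax; exact: separableDZ.
have eq a b : mdot (sepmx a b) (gradinv Wb) = mdot (sepmx a b) P0.
  have h1 : mdot (sepmx a b) P0 <= mdot (sepmx a b) (gradinv Wb).
    by apply: ineq; exists a, b.
  have h2 : mdot (sepmx a b) (gradinv Wb) <= mdot (sepmx a b) P0.
    have sepN : sepmx (fun i => - a i) (fun j => - b j) = - sepmx a b.
      by apply/matrixP => i j; rewrite !mxE opprD.
    have := ineq (sepmx (fun i => - a i) (fun j => - b j)).
    by rewrite sepN !mdotNl lerN2; apply; exists (fun i => - a i), (fun j => - b j).
  by apply/eqP; rewrite eq_le h1 h2.
have [rows cols] := marginals_of_sep eq.
have [_ [rP0 cP0]] := P0_coupling.
split; first exact: gradinv_simplex.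
by split=> [i | j]; rewrite ?rows ?rP0 ?cols ?cP0.
Qed.

Lemma optimal_coupling : exists Pstar : 'M[R]_(n, m),
  [/\ coupling p q Pstar,
      (forall P, coupling p q P -> Phi Pstar <= Phi P),
      (forall P, coupling p q P -> (forall Q, coupling p q Q -> Phi P <= Phi Q) ->
         P = Pstar) &
      exists (alpha : 'I_n -> R) (beta : 'I_m -> R),
        forall i j, gradmx Phi Pstar i j = alpha i + beta j].
Proof.
have [Wb sWb Wmax] := dual_max; have [a [b eWb]] := sWb.
have cP := dual_stationary sWb Wmax.
have dual_eq P : coupling p q P -> mdot Wb P = mdot Wb (gradinv Wb).
  by move=> cPP; rewrite {1 2}eWb (mdot_sep_coupling a b cPP) (mdot_sep_coupling a b cP).
have tight : Phi (gradinv Wb) = mdot Wb (gradinv Wb) - Phi_star Wb.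
  by rewrite /Phi_star; lra.
exists (gradinv Wb); split => //.
- by move=> P cPP; have := fenchel_young Wb cPP.1; rewrite dual_eq //; lra.
- move=> P cPP Pmin; apply: fenchel_young_tight cPP.1 _.
  by have := Pmin _ cP; rewrite tight -(dual_eq P cPP).
- have [c [_ gF]] := gradinvP Wb.
  by exists (fun i => a i + c), b => i j; rewrite gF eWb !mxE; ring.
Qed.

End Dual.

End Conjugate.

Unset Implicit Arguments.

Theorem theorem2 (R : realType) (n m : nat) (Phi : 'M[R]_(n, m) -> R)
  (* differentiable on R_{++}^{n x m} *)
  (Hdiff : forall A, posmx A -> differentiable Phi A)
  (* convex on R_{++}^{n x m} *)
  (Hconv : forall (A B : 'M[R]_(n, m)) (t : R), posmx A -> posmx B ->
     0 <= t <= 1 ->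
     Phi ((1 - t) *: A + t *: B) <= (1 - t) * Phi A + t * Phi B)
  (* positively 1-homogeneous *)
  (Hhom : forall (A : 'M[R]_(n, m)) (t : R), posmx A -> 0 < t ->
     Phi (t *: A) = t * Phi A)
  (* strictly convex on P_{nm-1} *)
  (Hsconv : forall (A B : 'M[R]_(n, m)) (t : R), simplexmx A -> simplexmx B ->
     A != B -> 0 < t < 1 ->
     Phi ((1 - t) *: A + t *: B) < (1 - t) * Phi A + t * Phi B)
  (* A |-> [S(A)] is a bijection P_{nm-1} -> R^{n x m} / <1_{nm}> *)
  (Hinj : forall (A B : 'M[R]_(n, m)) (c : R), simplexmx A -> simplexmx B ->
     gradmx Phi A - gradmx Phi B = c *: const_mx 1 -> A = B)
  (Hsurj : forall U : 'M[R]_(n, m), exists A : 'M[R]_(n, m), exists c : R,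
     simplexmx A /\ gradmx Phi A = U + c *: const_mx 1)
  (p : 'I_n -> R) (q : 'I_m -> R) (Hp : simplexv p) (Hq : simplexv q) :
  exists Pstar : 'M[R]_(n, m),
    [/\ coupling p q Pstar,
        (forall P, coupling p q P -> Phi Pstar <= Phi P),
        (forall P, coupling p q P -> (forall Q, coupling p q Q -> Phi P <= Phi Q) ->
           P = Pstar) &
        exists (alpha : 'I_n -> R) (beta : 'I_m -> R),
          forall i j, gradmx Phi Pstar i j = alpha i + beta j].
Proof. exact: (optimal_coupling Hdiff Hconv Hsconv Hinj Hsurj Hp Hq). Qed.
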